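(* Let ${\bf L}\in\mathbb{S}^d_{+}$ and let ${\bf S}$ be a random matrix with values in $\mathbb{S}^d_+$ and $\mathbb{E}[{\bf S}]={\bf I}_d$ (with finite second moments). Then the optimization problem $$\text{minimize } \log\det({\bf D}^{-1})\quad\text{subject to}\quad \mathbb{E}[{\bf S}{\bf D}{\bf L}{\bf D}{\bf S}]\preceq{\bf D},\quad {\bf D}\in\mathbb{S}^d_{++}$$ is a convex optimization problem with a convex constraint; in particular the set $\{{\bf D}\in\mathbb{S}^d_{++}:\mathbb{E}[{\bf S}{\bf D}{\bf L}{\bf D}{\bf S}]\preceq{\bf D}\}$ is convex.
   Context: $\mathbb{S}^d_{+}$ (resp. $\mathbb{S}^d_{++}$) denotes the set of $d\times d$ symmetric positive semidefinite (resp. positive definite) matrices; $\preceq$ is the Loewner order. *)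

From HB Require Import structures.
From mathcomp Require Import all_boot all_order all_algebra.
From mathcomp Require Import all_classical all_reals all_analysis.
Set Implicit Arguments. Unset Strict Implicit. Unset Printing Implicit Defensive.
Import Order.TTheory GRing.Theory Num.Theory.
Local Open Scope ring_scope.

Definition psd (R : realType) (d : nat) (A : 'M[R]_d) : Prop :=
  A^T = A /\ forall x : 'cV[R]_d, 0 <= (x^T *m A *m x) 0 0.

Definition pd (R : realType) (d : nat) (A : 'M[R]_d) : Prop :=
  A^T = A /\ forall x : 'cV[R]_d, x != 0 -> 0 < (x^T *m A *m x) 0 0.

Definition loewner_le (R : realType) (d : nat) (A B : 'M[R]_d) : Prop :=
  psd (B - A).

Definition mexpect (dT : measure_display) (T : measurableType dT)
  (R : realType) (P : probability T R) (d : nat) (M : T -> 'M[R]_d) : 'M[R]_d :=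
  \matrix_(i, j) fine ('E_P[fun w => M w i j])%E.

Definition feasible (dT : measure_display) (T : measurableType dT)
  (R : realType) (P : probability T R) (d : nat) (S : T -> 'M[R]_d)
  (L : 'M[R]_d) (D : 'M[R]_d) : Prop :=
  pd D /\ loewner_le (mexpect P (fun w => S w *m D *m L *m D *m S w)) D.

Definition objective (R : realType) (d : nat) (D : 'M[R]_d) : R :=
  ln (\det (invmx D)).

(* Feasibility: for symmetric [S] and psd [L], the map [D |-> S D L D S] is
   convex for the Loewner order, because
   [(1-t) D1 L D1 + t D2 L D2 - Dt L Dt = t (1-t) (D1 - D2) L (D1 - D2)]
   with [Dt = (1-t) D1 + t D2]; taking expectations (linear and monotone) gives
   [E[S Dt L Dt S] <= (1-t) E[S D1 L D1 S] + t E[S D2 L D2 S] <= Dt].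
   Objective: [log det] is concave on positive definite matrices.  By induction
   on the dimension, [det C = C00 * det (schur C)], and the Schur complement,
   being the partial minimum of the quadratic form of [C] over the first
   coordinate, is itself concave; the first factor is handled by concavity of
   [ln]. *)

From mathcomp Require Import all_boot all_order all_algebra.
From mathcomp Require Import all_classical all_reals all_analysis.
From mathcomp Require Import ring lra.
Import Order.TTheory GRing.Theory Num.Theory.
Local Open Scope ring_scope.
Set Implicit Arguments. Unset Strict Implicit. Unset Printing Implicit Defensive.

Section QuadraticForm.
Context {R : realType} {n : nat}.
Implicit Types (x u v : 'cV[R]_n) (A B L : 'M[R]_n).

Definition qform x A : R := (x^T *m A *m x) 0 0.

Lemma qformE x A : qform x A = \sum_i \sum_j x i 0 * A i j * x j 0.
Proof.
rewrite /qform mxE exchange_big /=; apply: eq_bigr => j _.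
rewrite mxE mulr_suml; apply: eq_bigr => i _.
by rewrite !mxE.
Qed.

Lemma qformD x A B : qform x (A + B) = qform x A + qform x B.
Proof. by rewrite /qform mulmxDr mulmxDl mxE. Qed.

Lemma qformZ x a A : qform x (a *: A) = a * qform x A.
Proof. by rewrite /qform -scalemxAr -scalemxAl mxE. Qed.

Lemma qformB x A B : qform x (A - B) = qform x A - qform x B.
Proof. by rewrite -scaleN1r qformD qformZ mulN1r. Qed.

Lemma qform_delta k A : qform (delta_mx k 0) A = A k k.
Proof. by rewrite /qform trmx_delta -rowE -colE !mxE. Qed.

Lemma qform_convex L u v t : psd L -> 0 <= t <= 1 ->
  qform ((1 - t) *: u + t *: v) L <= (1 - t) * qform u L + t * qform v L.
Proof.
move=> [_ L_ge0] /andP[t_ge0 t_le1].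
have -> : (1 - t) * qform u L + t * qform v L =
    qform ((1 - t) *: u + t *: v) L + t * (1 - t) * qform (u - v) L.
  rewrite !qformE !mulr_sumr -!big_split; apply: eq_bigr => i _ /=.
  rewrite !mulr_sumr -!big_split; apply: eq_bigr => j _ /=.
  by rewrite !mxE; ring.
rewrite lerDl; apply: mulr_ge0; last exact: L_ge0.
by rewrite mulr_ge0 ?subr_ge0.
Qed.

Lemma loewner_leP A B :
  loewner_le A B <-> (B - A)^T = B - A /\ forall x, qform x A <= qform x B.
Proof.
split=> -[symBA le_AB]; split=> // x.
  by rewrite -subr_ge0 -qformB; exact: le_AB.
by rewrite -/(qform x _) qformB subr_ge0.
Qed.

Lemma pd_diag_gt0 A k : pd A -> 0 < A k k.
Proof.
case=> _ A_gt0; rewrite -qform_delta; apply: A_gt0.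
by apply/eqP => /matrixP/(_ k 0); rewrite !mxE !eqxx => /eqP; rewrite oner_eq0.
Qed.

Lemma pd_convex A B t : 0 <= t <= 1 -> pd A -> pd B -> pd ((1 - t) *: A + t *: B).
Proof.
move=> /andP[t_ge0 t_le1] [symA A_gt0] [symB B_gt0]; split.
  by rewrite linearD !linearZ /= symA symB.
move=> x x_neq0; rewrite -/(qform x _) qformD !qformZ.
have := A_gt0 x x_neq0; have := B_gt0 x x_neq0; rewrite -!/(qform x _).
nra.
Qed.

End QuadraticForm.

Section SchurComplement.
Context {R : realType} {n : nat}.
Implicit Types (C : 'M[R]_n.+1) (y : 'cV[R]_n) (s : R).

Definition schur C : 'M[R]_n :=
  \matrix_(i, j) (C (lift ord0 i) (lift ord0 j)
                  - C (lift ord0 i) ord0 * C ord0 (lift ord0 j) / C ord0 ord0).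

Definition vcons s y : 'cV[R]_n.+1 :=
  \col_i (if unlift ord0 i is Some j then y j 0 else s).

Definition cross_term C y : R := \sum_j C ord0 (lift ord0 j) * y j 0.

Lemma vcons0 s y : vcons s y ord0 0 = s.
Proof. by rewrite mxE unlift_none. Qed.

Lemma vconsS s y j : vcons s y (lift ord0 j) 0 = y j 0.
Proof. by rewrite mxE liftK. Qed.

Lemma vcons_neq0 s y : y != 0 -> vcons s y != 0.
Proof.
apply: contraNN => /eqP y0; apply/eqP/matrixP => j k.
by rewrite (ord1 k) -(vconsS s) y0 !mxE.
Qed.

Lemma qform_vcons C s y : C^T = C -> C ord0 ord0 != 0 ->
  qform (vcons s y) C =
  C ord0 ord0 * (s + cross_term C y / C ord0 ord0) ^+ 2 + qform y (schur C).
Proof.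
move=> symC c_neq0; set c := C ord0 ord0; set r := cross_term C y.
have sym i j : C i j = C j i by rewrite -{1}symC mxE.
rewrite !qformE big_ord_recl (big_ord_recl n) vcons0 /=.
under [X in _ + X = _]eq_bigr => i _ do rewrite (big_ord_recl n) !vconsS vcons0.
under [X in _ + X = _]eq_bigr => i _ do under eq_bigr => j _ do rewrite !vconsS.
under [X in _ = _ + X]eq_bigr => i _ do under eq_bigr => j _ do rewrite mxE.
rewrite big_split /=.
under eq_bigr => i _ do rewrite vconsS.
have -> : \sum_(i < n) s * C ord0 (lift ord0 i) * y i 0 = s * r.
  by rewrite /r /cross_term mulr_sumr; apply: eq_bigr => i _; rewrite mulrA.
have -> : \sum_(i < n) y i 0 * C (lift ord0 i) ord0 * s = r * s.
  rewrite /r /cross_term mulr_suml; apply: eq_bigr => i _; rewrite sym; ring.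
have -> : \sum_(i < n) \sum_(j < n) y i 0 * (C (lift ord0 i) (lift ord0 j) -
      C (lift ord0 i) ord0 * C ord0 (lift ord0 j) / c) * y j 0 =
  \sum_(i < n) \sum_(j < n) y i 0 * C (lift ord0 i) (lift ord0 j) * y j 0 - r * r / c.
  rewrite /r /cross_term -mulrA [X in _ - X]mulr_suml -sumrB; apply: eq_bigr => i _.
  rewrite [X in _ * X]mulr_suml [X in _ - X]mulr_sumr -sumrB; apply: eq_bigr => j _.
  rewrite (sym (lift ord0 i) ord0); ring.
by rewrite -/c; field.
Qed.

Lemma qform_vcons_schur C y : C^T = C -> C ord0 ord0 != 0 ->
  qform (vcons (- (cross_term C y / C ord0 ord0)) y) C = qform y (schur C).
Proof. by move=> symC c_neq0; rewrite qform_vcons // addNr expr0n mulr0 add0r. Qed.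

Lemma qform_schur_le C s y : pd C -> qform y (schur C) <= qform (vcons s y) C.
Proof.
move=> pdC; have c_gt0 := pd_diag_gt0 ord0 pdC.
rewrite qform_vcons ?lt0r_neq0 //; last exact: pdC.1.
by rewrite lerDr mulr_ge0 ?sqr_ge0 ?ltW.
Qed.

Lemma pd_schur C : pd C -> pd (schur C).
Proof.
move=> pdC; have c_gt0 := pd_diag_gt0 ord0 pdC; case: (pdC) => symC C_gt0.
have sym i j : C i j = C j i by rewrite -{1}symC mxE.
split.
  apply/matrixP => i j; rewrite !mxE (sym (lift ord0 j)) (sym ord0 (lift ord0 i)).
  by rewrite (sym (lift ord0 j) ord0) [_ * C ord0 _]mulrC.
move=> y y_neq0; rewrite -/(qform _ _) -qform_vcons_schur ?lt0r_neq0 //.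
exact/C_gt0/vcons_neq0.
Qed.

(* Gaussian elimination of the first column: [C = E *m C'] with [E] unit lower
   triangular and [C'] block upper triangular with blocks [C 0 0] and [schur C]. *)
Lemma det_schur C : C ord0 ord0 != 0 -> \det C = C ord0 ord0 * \det (schur C).
Proof.
move=> c_neq0; set c := C ord0 ord0.
pose C' : 'M[R]_n.+1 := \matrix_(i, j)
  (if i == ord0 then C i j else C i j - C i ord0 * C ord0 j / c).
pose E : 'M[R]_n.+1 := \matrix_(i, j)
  ((i == j)%:R + (if (i != ord0) && (j == ord0) then C i ord0 / c else 0)).
have C_factor : C = E *m C'.
  apply/matrixP => i j; rewrite !mxE (big_ord_recl n) !mxE /=.
  case: (unliftP ord0 i) => [i'|] ->; last first.
    rewrite eqxx /= big1 ?addr0 ?mul1r // => k _.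
    by rewrite /E /C' !mxE /= addr0 mul0r.
  rewrite (bigD1 i') //= big1 ?addr0; last first.
    move=> k k_neq; rewrite /E /C' !mxE /= (inj_eq lift_inj) eq_sym (negbTE k_neq) /=.
    by rewrite addr0 mul0r.
  by rewrite /E /C' !mxE /= eqxx /= -/c; field.
have det_E : \det E = 1.
  rewrite det_trig; last first.
    apply/is_trig_mxP => i j lt_ij; rewrite /E !mxE.
    rewrite (_ : (i == j) = false); last by apply/negbTE; rewrite neq_ltn lt_ij.
    rewrite (_ : (j == ord0) = false) ?andbF ?addr0 //.
    by apply/negbTE; rewrite -(inj_eq val_inj) /= -lt0n (leq_ltn_trans _ lt_ij).
  by apply: big1 => i _; rewrite /E !mxE eqxx; case: eqP => [->|] //=; rewrite addr0.
have det_C' : \det C' = c * \det (schur C).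
  rewrite (expand_det_col _ ord0) big_ord_recl big1 ?addr0; last first.
    by move=> i _; rewrite /C' !mxE /= /c mulfK // subrr mul0r.
  rewrite /C' !mxE eqxx /cofactor expr0 mul1r; congr (_ * \det _).
  by apply/matrixP => i j; rewrite !mxE.
by rewrite {1}C_factor det_mulmx det_E mul1r.
Qed.

End SchurComplement.

Lemma det_pd_gt0 (R : realType) n (C : 'M[R]_n) : pd C -> 0 < \det C.
Proof.
elim: n C => [|n IH] C pdC; first by rewrite det_mx00.
have c_gt0 := pd_diag_gt0 ord0 pdC.
by rewrite det_schur ?lt0r_neq0 // mulr_gt0 // IH //; exact: pd_schur.
Qed.

Lemma ln_concave (R : realType) (a b t : R) : 0 < a -> 0 < b -> 0 <= t <= 1 ->
  (1 - t) * ln a + t * ln b <= ln ((1 - t) * a + t * b).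
Proof.
move=> a_gt0 b_gt0 /andP[t_ge0 t_le1].
have := @concave_ln _ (Itv01 t_ge0 t_le1) _ _ b_gt0 a_gt0.
by rewrite !convRE /= /unstable.onem [_ * ln b + _]addrC [t * b + _]addrC.
Qed.

(* Induction on the dimension: the Schur complement is concave for the
   quadratic-form order, and [det C = C 0 0 * det (schur C)]. *)
Lemma ln_det_concave (R : realType) n (A B C : 'M[R]_n) t : 0 <= t <= 1 ->
  pd A -> pd B -> pd C ->
  (forall x, (1 - t) * qform x A + t * qform x B <= qform x C) ->
  (1 - t) * ln (\det A) + t * ln (\det B) <= ln (\det C).
Proof.
elim: n A B C => [|n IH] A B C t01 pdA pdB pdC le_ABC.
  by rewrite !det_mx00 ln1 !mulr0 addr0.
have [t_ge0 t_le1] := andP t01.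
have a_gt0 := pd_diag_gt0 ord0 pdA; have b_gt0 := pd_diag_gt0 ord0 pdB.
have c_gt0 := pd_diag_gt0 ord0 pdC.
have le_schur y :
    (1 - t) * qform y (schur A) + t * qform y (schur B) <= qform y (schur C).
  rewrite -(qform_vcons_schur y pdC.1 (lt0r_neq0 c_gt0)); apply: le_trans (le_ABC _).
  by apply: lerD; apply: ler_wpM2l; rewrite ?subr_ge0 ?qform_schur_le.
have le_corner : (1 - t) * A ord0 ord0 + t * B ord0 ord0 <= C ord0 ord0.
  by have := le_ABC (delta_mx ord0 0); rewrite !qform_delta.
have mix_gt0 : 0 < (1 - t) * A ord0 ord0 + t * B ord0 ord0 by nra.
rewrite -(ler_ln (x := _ + _)) ?posrE // in le_corner.
have := ln_concave a_gt0 b_gt0 t01.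
have := IH _ _ _ t01 (pd_schur pdA) (pd_schur pdB) (pd_schur pdC) le_schur.
have sA_gt0 := det_pd_gt0 (pd_schur pdA); have sB_gt0 := det_pd_gt0 (pd_schur pdB).
have sC_gt0 := det_pd_gt0 (pd_schur pdC).
rewrite !det_schur ?lt0r_neq0 // !lnM ?posrE //.
lra.
Qed.

Lemma objective_convex (R : realType) n (D1 D2 : 'M[R]_n) t : 0 <= t <= 1 ->
  pd D1 -> pd D2 ->
  objective ((1 - t) *: D1 + t *: D2) <= (1 - t) * objective D1 + t * objective D2.
Proof.
move=> t01 pdD1 pdD2; have pdDt := pd_convex t01 pdD1 pdD2.
have mix x : (1 - t) * qform x D1 + t * qform x D2
             <= qform x ((1 - t) *: D1 + t *: D2) by rewrite qformD !qformZ.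
have := ln_det_concave t01 pdD1 pdD2 pdDt mix.
have := det_pd_gt0 pdD1; have := det_pd_gt0 pdD2; have := det_pd_gt0 pdDt.
rewrite /objective !det_inv => dt_gt0 d2_gt0 d1_gt0.
rewrite !lnV ?posrE //; lra.
Qed.

Section RealExpectation.
Context {dT : measure_display} {T : measurableType dT} {R : realType}.
Variable P : probability T R.
Implicit Types X Y : T -> R.

Definition rexpect X : R := fine 'E_P[X].

Lemma rexpectD X Y : X \in Lfun P 1 -> Y \in Lfun P 1 ->
  rexpect (fun w => X w + Y w) = rexpect X + rexpect Y.
Proof.
by move=> X1 Y1; rewrite /rexpect (expectationD X1 Y1) fineD ?expectation_fin_num.
Qed.

Lemma rexpectZ X c : X \in Lfun P 1 -> rexpect (fun w => c * X w) = c * rexpect X.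
Proof.
move=> X1; have -> : (fun w => c * X w) = c \o* X by apply/funext => w /=; rewrite mulrC.
by rewrite /rexpect expectationZl // -(fineK (expectation_fin_num X1)) -EFinM.
Qed.

Lemma rexpect_le X Y : X \in Lfun P 1 -> Y \in Lfun P 1 ->
  (forall w, X w <= Y w) -> rexpect X <= rexpect Y.
Proof.
move=> X1 Y1 le_XY; have YX_ge0 w : 0 <= (Y \- X) w by rewrite /= subr_ge0.
have := @expectation_ge0 _ _ _ P _ YX_ge0.
rewrite expectationB // -(fineK (expectation_fin_num X1)).
by rewrite -(fineK (expectation_fin_num Y1)) -EFinB lee_fin subr_ge0.
Qed.

Lemma Lfun1_sum (I : Type) (r : seq I) (F : I -> T -> R) :
  (forall i, F i \in Lfun P 1) -> (fun w => \sum_(i <- r) F i w) \in Lfun P 1.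
Proof.
move=> F1; elim: r => [|i r IH].
  by under eq_fun do rewrite big_nil; exact: rpred0.
by under eq_fun do rewrite big_cons; exact: rpredD.
Qed.

Lemma rexpect_sum (I : Type) (r : seq I) (F : I -> T -> R) :
  (forall i, F i \in Lfun P 1) ->
  rexpect (fun w => \sum_(i <- r) F i w) = \sum_(i <- r) rexpect (F i).
Proof.
move=> F1; elim: r => [|i r IH].
  by under eq_fun do rewrite big_nil; rewrite big_nil /rexpect expectation_cst.
under eq_fun do rewrite big_cons.
by rewrite big_cons rexpectD ?IH //; exact: Lfun1_sum.
Qed.

End RealExpectation.

Section MatrixExpectation.
Context {dT : measure_display} {T : measurableType dT} {R : realType} {n : nat}.
Variable P : probability T R.
Implicit Types (G S : T -> 'M[R]_n) (x : 'cV[R]_n).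

Lemma mexpect_tr G : (forall w, (G w)^T = G w) -> (mexpect P G)^T = mexpect P G.
Proof.
move=> symG; apply/matrixP => i j; rewrite !mxE.
by congr (fine 'E_P[_])%E; apply/funext => w; rewrite -{1}symG mxE.
Qed.

Lemma qform_entries G x : (fun w => qform x (G w)) =
  (fun w => \sum_i \sum_j (x i 0 * x j 0) * G w i j).
Proof.
apply/funext => w; rewrite qformE.
by apply: eq_bigr => i _; apply: eq_bigr => j _; ring.
Qed.

Section IntegrableEntries.
Variable G : T -> 'M[R]_n.
Hypothesis G1 : forall i j, (fun w => G w i j) \in Lfun P 1.

Lemma Lfun1_qform x : (fun w => qform x (G w)) \in Lfun P 1.
Proof.
rewrite qform_entries; apply: Lfun1_sum => i; apply: Lfun1_sum => j.
exact: rpredZ.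
Qed.

Lemma qform_mexpect x : qform x (mexpect P G) = rexpect P (fun w => qform x (G w)).
Proof.
rewrite qform_entries rexpect_sum => [|i]; last first.
  by apply: Lfun1_sum => j; exact: rpredZ.
rewrite qformE; apply: eq_bigr => i _; rewrite rexpect_sum => [|j]; last exact: rpredZ.
by apply: eq_bigr => j _; rewrite rexpectZ // mxE /rexpect; ring.
Qed.

End IntegrableEntries.

Lemma Lfun1_sandwich S (M : 'M[R]_n) :
  (forall i j, (fun w => S w i j) \in Lfun P 2%:E) ->
  forall i j, (fun w => (S w *m M *m S w) i j) \in Lfun P 1.
Proof.
move=> S2 i j.
have -> : (fun w => (S w *m M *m S w) i j) =
    (fun w => \sum_k \sum_l M l k * (S w i l * S w k j)).
  apply/funext => w; rewrite mxE; apply: eq_bigr => k _.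
  by rewrite mxE mulr_suml; apply: eq_bigr => l _; ring.
apply: Lfun1_sum => k; apply: Lfun1_sum => l.
exact/rpredZ/Lfun2_mul_Lfun1.
Qed.

End MatrixExpectation.

Section Sandwich.
Context {R : realType} {n : nat}.
Implicit Types (S D L : 'M[R]_n) (x : 'cV[R]_n).

Lemma qform_sandwich S D L x : S^T = S -> D^T = D ->
  qform x (S *m D *m L *m D *m S) = qform (D *m S *m x) L.
Proof. by move=> symS symD; rewrite /qform !trmx_mul symS symD !mulmxA. Qed.

Lemma qform_sandwich_convex S D1 D2 L x t : 0 <= t <= 1 -> psd L ->
  S^T = S -> D1^T = D1 -> D2^T = D2 ->
  qform x (S *m ((1 - t) *: D1 + t *: D2) *m L *m ((1 - t) *: D1 + t *: D2) *m S) <=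
  (1 - t) * qform x (S *m D1 *m L *m D1 *m S) + t * qform x (S *m D2 *m L *m D2 *m S).
Proof.
move=> t01 psdL symS symD1 symD2.
have symDt : ((1 - t) *: D1 + t *: D2)^T = (1 - t) *: D1 + t *: D2.
  by rewrite linearD !linearZ /= symD1 symD2.
rewrite !qform_sandwich // !mulmxDl -!scalemxAl.
exact: qform_convex.
Qed.

End Sandwich.

Lemma feasible_convex (dT : measure_display) (T : measurableType dT) (R : realType)
    (P : probability T R) d (L : 'M[R]_d) (S : T -> 'M[R]_d) :
  psd L -> (forall w, (S w)^T = S w) ->
  (forall i j, (fun w => S w i j) \in Lfun P 2%:E) ->
  forall D1 D2 t, 0 <= t <= 1 -> feasible P S L D1 -> feasible P S L D2 ->
  feasible P S L ((1 - t) *: D1 + t *: D2).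
Proof.
move=> psdL symS S2 D1 D2 t t01 [pdD1 /loewner_leP[_ le1]] [pdD2 /loewner_leP[_ le2]].
have [t_ge0 t_le1] := andP t01.
have pdDt := pd_convex t01 pdD1 pdD2.
have F1 D i j : (fun w => (S w *m D *m L *m D *m S w) i j) \in Lfun P 1.
  have := Lfun1_sandwich (D *m L *m D) S2 i j.
  by under eq_fun do rewrite !mulmxA.
split=> //; apply/loewner_leP; split.
  rewrite linearB /= pdDt.1 mexpect_tr // => w.
  by rewrite !trmx_mul symS pdDt.1 psdL.1 !mulmxA.
move=> x; move: (le1 x) (le2 x); rewrite qformD !qformZ !qform_mexpect // => le1x le2x.
have Q1 D : (fun w => qform x (S w *m D *m L *m D *m S w)) \in Lfun P 1.
  exact: Lfun1_qform.
apply: le_trans (_ : rexpect P (fun w =>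
    (1 - t) * qform x (S w *m D1 *m L *m D1 *m S w)
    + t * qform x (S w *m D2 *m L *m D2 *m S w)) <= _).
  apply: rexpect_le => //; first by apply: rpredD; apply: rpredZ.
  by move=> w; apply: qform_sandwich_convex; rewrite ?pdD1.1 ?pdD2.1.
rewrite rexpectD ?rexpectZ //; try exact: rpredZ.
by apply: lerD; apply: ler_wpM2l; rewrite ?subr_ge0.
Qed.

Unset Implicit Arguments.

Theorem proposition1 (R : realType) (dT : measure_display) (T : measurableType dT)
  (P : probability T R) (d : nat) (L : 'M[R]_d) (S : T -> 'M[R]_d) :
  psd L ->
  (forall w, psd (S w)) ->
  (forall i j, (fun w => S w i j) \in Lfun P 2%E) ->
  mexpect P S = 1%:M ->
  (* the feasible set is convex *)
  (forall (D1 D2 : 'M[R]_d) (t : R), 0 <= t <= 1 ->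
     feasible P S L D1 -> feasible P S L D2 ->
     feasible P S L ((1 - t) *: D1 + t *: D2)) /\
  (* the objective log det(D^{-1}) is convex on S^d_++ *)
  (forall (D1 D2 : 'M[R]_d) (t : R), 0 <= t <= 1 ->
     pd D1 -> pd D2 ->
     objective ((1 - t) *: D1 + t *: D2)
       <= (1 - t) * objective D1 + t * objective D2).
Proof.
move=> psdL psdS S2 _; split.
  by apply: feasible_convex => // w; case: (psdS w).
exact: objective_convex.
Qed.
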